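(* Let $m\ge 1$ and $p,q\in\{1,\dots,2n-1\}$ satisfy $m+(p-n)_+\ge 1+(q-n)_+$, where $x_+=\max(x,0)$. Write $s_1<s_2<\cdots<s_{2n}$ for the elements of $\mathcal{I}$ in increasing order (so $s_j=j$ for $j\le n$ and $s_j=\overline{2n-j+1}$ for $n<j\le 2n$). Suppose $M_1\in M_p(m)$ is one of the following monomials (empty products being $1$): (1) $M_1=X_{s_2}(p+m-1)X_{s_3}(p+m-2)\cdots X_{s_p}(m+1)\,X_{\bar 1}(m)$; (2) $M_1=X_{s_2}(p+m-1)X_{s_3}(p+m-2)\cdots X_{s_{p+1}}(m)$; (3) $M_1=X_{s_1}(p+m-1)X_{s_2}(p+m-2)\cdots X_{s_{p-1}}(m+1)\,X_{\bar 1}(m)$. Then for every $M_2\in M_q(1)$, the monomial $M_1\cdot M_2$ is not a highest weight vector of $\mathcal{M}$.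
   Context: Fix $n\ge 2$ and type $C_n$ with $I=\{1,\dots,n\}$. Let $\mathcal{M}$ be the set of Laurent monomials $M=\prod_{i\in I,k\in\mathbb{Z}}Y_i(k)^{y_i(k)}$ ($y_i(k)\in\mathbb{Z}$, finitely many nonzero); put $Y_0(k)=Y_{n+1}(k)=1$. For $i\in I$ put $\varepsilon_i(M)=\max_k(-\sum_{j>k}y_i(j))$; $M$ is a highest weight vector if $\varepsilon_i(M)=0$ for all $i\in I$ (equivalently all Kashiwara operators $\tilde e_i$ of Nakajima's monomial crystal kill $M$). The $X$-variables are $X_i(k)=Y_i(k)Y_{i-1}(k+1)^{-1}$ and $X_{\bar i}(k)=Y_{i-1}(k+n-i+1)Y_i(k+n-i+1)^{-1}$ for $1\le i\le n$, $k\in\mathbb{Z}$. The alphabet $\mathcal{I}=\{1,\dots,n,\bar n,\dots,\bar 1\}$ is ordered $1<\cdots<n<\bar n<\cdots<\bar 1$. For $1\le k\le 2n$, $m\in\mathbb{Z}$: $M_k(m)=\{X_{i_1}(k+m-1)X_{i_2}(k+m-2)\cdots X_{i_k}(m): i_j\in\mathcal{I},\ i_1<\cdots<i_k\}$. *)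

From mathcomp Require Import all_boot all_order all_algebra.
Set Implicit Arguments. Unset Strict Implicit. Unset Printing Implicit Defensive.
Import Order.TTheory GRing.Theory Num.Theory.
Local Open Scope ring_scope.

(* A Laurent monomial prod Y_i(k)^e is represented by a finite list of
   factors (i, k, e) meaning Y_i(k)^e; the exponent y_i(k) is the sum of the
   e over all factors with index (i,k).  The product of monomials is list
   concatenation.  Factors with i = 0 (i.e. Y_0(k) = 1) are harmless since
   only i in I = {1..n} is ever inspected. *)
Definition monomial := seq (nat * int * int).

Definition yexp (M : monomial) (i : nat) (k : int) : int :=
  \sum_(t <- M | (t.1.1 == i) && (t.1.2 == k)) t.2.

Definition tailsum (M : monomial) (i : nat) (k : int) : int :=
  \sum_(t <- M | (t.1.1 == i) && (k < t.1.2)) t.2.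

(* epsilon_i(M) = max_k (- sum_{j>k} y_i(j)); this max is always >= 0
   (the tail sum vanishes for k large), so epsilon_i(M) = 0 iff all the
   tail sums are >= 0.  Highest weight: epsilon_i(M) = 0 for all i in I. *)
Definition highest_weight (n : nat) (M : monomial) : Prop :=
  forall (i : nat), (1 <= i <= n)%N -> forall k : int, 0 <= tailsum M i k.

Inductive letter := Unb of nat | Bar of nat.

Definition letter_valid (n : nat) (a : letter) : bool :=
  match a with Unb i => (1 <= i <= n)%N | Bar i => (1 <= i <= n)%N end.

Definition lrank (n : nat) (a : letter) : nat :=
  match a with Unb i => i | Bar i => (2 * n + 1 - i)%N end.

Definition lt_letter (n : nat) (a b : letter) : bool := (lrank n a < lrank n b)%N.

Definition sl (n j : nat) : letter :=
  if (j <= n)%N then Unb j else Bar (2 * n - j + 1)%N.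

Definition Xvar (n : nat) (a : letter) (k : int) : monomial :=
  match a with
  | Unb i => [:: (i, k, 1); (i.-1, k + 1, -1)]
  | Bar i => [:: (i.-1, k + (n - i + 1)%N%:Z, 1); (i, k + (n - i + 1)%N%:Z, -1)]
  end.

(* X_{a_1}(k+m-1) X_{a_2}(k+m-2) ... X_{a_k}(m) for a list ls = [a_1;...;a_k] *)
Definition Xprod (n : nat) (ls : seq letter) (m : int) : monomial :=
  flatten [seq Xvar n (nth (Unb 0) ls t) ((size ls)%:Z + m - 1 - t%:Z)
          | t <- iota 0 (size ls)].

Definition inMk (n k : nat) (m : int) (M : monomial) : Prop :=
  exists ls : seq letter,
    [/\ size ls = k, all (letter_valid n) ls, sorted (lt_letter n) ls
      & M = Xprod n ls m].

From mathcomp Require Import all_boot all_order all_algebra.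
From mathcomp Require Import zify.
Set Implicit Arguments. Unset Strict Implicit. Unset Printing Implicit Defensive.
Import Order.TTheory GRing.Theory Num.Theory.
Local Open Scope ring_scope.

(* Write each X_{s_r}(k) as Y[ypos r k] / Y[ypos (r-1) (k+1)] and order positions
   by time, then index.  The positive Y of X_{s_r} then lies strictly below its
   negative Y when r >= 2, and an initial run s_1 ... s_a of a column telescopes to
   Y[ypos a], which lies strictly below the negative Y of the next letter.  If every
   positive Y_i(k) (i in I) of a monomial lies strictly below some Y_j(l)^-1 (j in I),
   nothing compensates a maximal such negative factor, so the tail sum of y_j after
   l - 1 is negative.  M_1 has this property and contains the negative Y of its last
   letter at time >= m + 1 + (p-n)_+; so has M_2, unless it is the run s_1 ... s_q,
   i.e. the single Y[ypos q 1] at time 1 + (q-n)_+, which the hypothesis on m, p, q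
   places strictly below that factor of M_1. *)

Lemma tailsum_cat M1 M2 i k : tailsum (M1 ++ M2) i k = tailsum M1 i k + tailsum M2 i k.
Proof. by rewrite /tailsum big_cat. Qed.

Lemma Xprod_cons n a ls m :
  Xprod n (a :: ls) m = Xvar n a ((size ls)%:Z + m) ++ Xprod n ls m.
Proof.
rewrite /Xprod /= (iotaDl 1 0) -map_comp; congr (Xvar _ _ _ ++ flatten _).
  by lia.
by apply: eq_map => t /=; congr Xvar; lia.
Qed.

Lemma Xprod_cat n ls1 ls2 m :
  Xprod n (ls1 ++ ls2) m = Xprod n ls1 (m + (size ls2)%:Z) ++ Xprod n ls2 m.
Proof.
elim: ls1 => [|a ls1 IH] /=; first by rewrite /Xprod.
rewrite !Xprod_cons IH catA size_cat; congr ((Xvar _ _ _ ++ _) ++ _); lia.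
Qed.

Definition column n (rs : seq nat) (m : int) : monomial := Xprod n (map (sl n) rs) m.

Lemma column_cat n rs1 rs2 m :
  column n (rs1 ++ rs2) m = column n rs1 (m + (size rs2)%:Z) ++ column n rs2 m.
Proof. by rewrite /column map_cat Xprod_cat size_map. Qed.

Lemma column1 n r m : column n [:: r] m = Xvar n (sl n r) m.
Proof. by rewrite /column /= Xprod_cons cats0 add0r. Qed.

Lemma column_cons n r rs m :
  column n (r :: rs) m = Xvar n (sl n r) (m + (size rs)%:Z) ++ column n rs m.
Proof. by rewrite -cat1s column_cat column1. Qed.

Lemma column_rcons n rs r m :
  column n (rcons rs r) m = column n rs (m + 1) ++ Xvar n (sl n r) m.
Proof. by rewrite -cats1 column_cat column1. Qed.

(* [(ypos n b k, 1)] is the column s_1 ... s_b ending at time k, i.e. Y_b(k) if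
   b <= n and Y_(2n-b)(k+b-n) otherwise (Y_0 = 1). *)
Definition ypos (n b : nat) (k : int) : nat * int :=
  (if (b <= n)%N then b else (2 * n - b)%N, k + (b - n)%N%:Z).

Lemma Xvar_sl n r k : (1 <= r <= 2 * n)%N ->
  Xvar n (sl n r) k = [:: (ypos n r k, 1); (ypos n r.-1 (k + 1), -1)].
Proof.
move=> r_range; rewrite /sl /ypos.
case: (leqP r n) => r_le /=.
  by rewrite ifT ?subnKC; [congr [:: (_, _, _); (_, _, _)] | ]; lia.
case: (leqP r.-1 n) => r1_le; congr [:: (_, _, _); (_, _, _)]; lia.
Qed.
Definition tail_equiv n (M M' : monomial) : Prop :=
  forall i, (1 <= i <= n)%N -> tailsum M i =1 tailsum M' i.

Lemma tail_equiv_cat n M1 M2 A1 A2 :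
  tail_equiv n M1 A1 -> tail_equiv n M2 A2 -> tail_equiv n (M1 ++ M2) (A1 ++ A2).
Proof. by move=> e1 e2 i i_range k; rewrite !tailsum_cat e1 ?e2. Qed.

Lemma tail_equiv_catC n M1 M2 : tail_equiv n (M1 ++ M2) (M2 ++ M1).
Proof. by move=> i _ k; rewrite !tailsum_cat addrC. Qed.

Lemma highest_weight_equiv n M A :
  tail_equiv n M A -> highest_weight n M -> highest_weight n A.
Proof. by move=> e hw i i_range k; rewrite -e //; exact: hw. Qed.

Lemma tailsum_cancel x e y i k :
  tailsum [:: (x, e); y; (x, - e)] i k = tailsum [:: y] i k.
Proof.
rewrite /tailsum !big_cons big_nil /=.
by case: (_ && _); case: (_ && _); lia.
Qed.

Lemma column_iota1 n a m : (a <= 2 * n)%N ->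
  tail_equiv n (column n (iota 1 a) m) [:: (ypos n a m, 1)].
Proof.
elim: a m => [|a IH] m a_le i i_range k.
  by rewrite /tailsum big_cons !big_nil /ypos /=; case: ifP => //; lia.
rewrite -(addn1 a) iotaD cats1 column_rcons tailsum_cat (IH _ (ltnW a_le)) //.
by rewrite -tailsum_cat add1n addn1 Xvar_sl ?tailsum_cancel //; lia.
Qed.

Definition pos_lt (x y : nat * int) : bool :=
  (x.2 < y.2) || (x.2 == y.2) && (x.1 < y.1)%N.

Lemma pos_lt_irr : irreflexive pos_lt.
Proof. by move=> x; rewrite /pos_lt ltxx eqxx ltnn. Qed.

Lemma pos_lt_trans : transitive pos_lt.
Proof. by move=> y x z; rewrite /pos_lt; lia. Qed.

Lemma pos_le_lt_trans x y z : x.1 = y.1 -> x.2 <= y.2 -> pos_lt y z -> pos_lt x z.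
Proof. by case: x y z => [i k] [j l] [h t] /= <-; rewrite /pos_lt /=; lia. Qed.

Lemma ypos_lt_pred n r k : (1 <= r <= 2 * n)%N ->
  pos_lt (ypos n r k) (ypos n r.-1 (k + 1)).
Proof. by move=> r_range; rewrite /pos_lt /ypos /=; case: ifP; case: ifP; lia. Qed.

Lemma ypos_lt_mono n a b k : (a < b)%N -> pos_lt (ypos n a k) (ypos n b k).
Proof. by move=> a_lt_b; rewrite /pos_lt /ypos /=; case: ifP; case: ifP; lia. Qed.

Definition neg_factor n (f : nat * int * int) : bool :=
  (1 <= f.1.1 <= n)%N && (f.2 < 0).

Lemma neg_factor_ypos n r k : (2 <= r <= 2 * n)%N ->
  neg_factor n (ypos n r.-1 k, -1).
Proof. by move=> r_range; rewrite /neg_factor /ypos /=; case: ifP; lia. Qed.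

Definition dominated n (M : monomial) : Prop :=
  {in M, forall f, (1 <= f.1.1 <= n)%N -> 0 < f.2 ->
           has (fun g => neg_factor n g && pos_lt f.1 g.1) M}.

Lemma dominated_cat n A B : dominated n A -> dominated n B -> dominated n (A ++ B).
Proof.
move=> domA domB f; rewrite mem_cat has_cat => /orP[fA | fB] f_range f_pos.
  by rewrite domA.
by rewrite domB ?orbT.
Qed.

Lemma dominated_cons n x A : dominated n A ->
  has (fun g => neg_factor n g && pos_lt x.1 g.1) A -> dominated n (x :: A).
Proof.
move=> domA x_below f; rewrite in_cons /= => /predU1P[-> | fA] f_range f_pos.
  by rewrite x_below orbT.
by rewrite domA ?orbT.
Qed.

Lemma Xvar_dominated n r k : (2 <= r <= 2 * n)%N -> dominated n (Xvar n (sl n r) k).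
Proof.
move=> r_range; rewrite Xvar_sl; last by lia.
apply: dominated_cons; last by rewrite /= neg_factor_ypos // ypos_lt_pred //; lia.
by move=> f; rewrite mem_seq1 => /eqP -> /=.
Qed.

Lemma column_dominated n rs m :
  all (fun r => 2 <= r <= 2 * n)%N rs -> dominated n (column n rs m).
Proof.
elim: rs m => [|r rs IH] m /=; first by move=> ? f; rewrite /column /Xprod.
case/andP=> r_range rs_range; rewrite column_cons.
by apply: dominated_cat; [exact: Xvar_dominated | exact: IH].
Qed.

Lemma exists_maximal (T : eqType) (lt : rel T) (s : seq T) :
  irreflexive lt -> transitive lt -> s != [::] -> exists2 x, x \in s & ~~ has (lt x) s.
Proof.
move=> lt_irr lt_trans; elim: s => [//|y s IH] _.
have [-> | /IH[x xs x_max]] := eqVneq s [::].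
  by exists y; rewrite ?mem_seq1 //= lt_irr.
case lt_xy: (lt x y).
  exists y; first exact: mem_head.
  rewrite /= lt_irr /=; apply: contra x_max => /hasP[z zs lt_yz].
  by apply/hasP; exists z => //; exact: lt_trans lt_yz.
by exists x; rewrite ?in_cons ?xs ?orbT //= lt_xy.
Qed.

Lemma not_highest_weight_dominated n M :
  dominated n M -> has (neg_factor n) M -> ~ highest_weight n M.
Proof.
move=> domM has_neg hw.
have [g] : exists2 g, g \in filter (neg_factor n) M &
    ~~ has (fun h => pos_lt g.1 h.1) (filter (neg_factor n) M).
  apply: exists_maximal => [x | y x z|]; first exact: pos_lt_irr.
    exact: pos_lt_trans.
  by rewrite -size_eq0 size_filter -lt0n -has_count.
rewrite mem_filter => /andP[/andP[g_range g_neg] gM] g_max.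
have rest_le0 : \sum_(t <- rem g M | (t.1.1 == g.1.1) && (g.1.2 - 1 < t.1.2)) t.2 <= 0.
  rewrite big_seq_cond; apply: sumr_le0 => t /andP[/mem_rem tM /andP[/eqP t_idx t_time]].
  rewrite leNgt; apply/negP => t_pos.
  have /hasP[h hM /andP[h_neg t_lt_h]] := domM t tM ltac:(by rewrite t_idx) t_pos.
  apply: (negP g_max); apply/hasP; exists h; first by rewrite mem_filter h_neg.
  by apply: pos_le_lt_trans t_lt_h; [rewrite t_idx | rewrite -ltzD1 -ltrBlDr].
have := hw g.1.1 g_range (g.1.2 - 1).
rewrite /tailsum (big_rem g gM) /= eqxx ltrBlDr ltrDl ltr01 /=.
by rewrite leNgt (ltr_wnDr rest_le0 g_neg).
Qed.

Lemma split_initial_run b rs : sorted ltn rs -> all (leq b) rs ->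
  exists a rest, rs = iota b a ++ rest /\ all (leq (b + a).+1) rest.
Proof.
elim: rs b => [|r rs IH] b; first by exists 0%N, [::].
move=> srt /= /andP[b_le_r rs_ge_b].
have rs_gt_r : all (ltn r) rs := order_path_min ltn_trans srt.
have [<- | r_neq_b] := eqVneq r b.
  have [a [rest [-> rest_ge]]] := IH r.+1 (path_sorted srt) rs_gt_r.
  by exists a.+1, rest; rewrite addnS -addSn.
exists 0%N, (r :: rs); split => //=; rewrite addn0 ltn_neqAle eq_sym r_neq_b b_le_r /=.
by apply/allP => x /(allP rs_gt_r); rewrite /ltn /=; lia.
Qed.

Lemma run_column_dominated n a rest m : rest != [::] ->
  all (fun r => a.+2 <= r <= 2 * n)%N rest ->
  dominated n ((ypos n a (m + (size rest)%:Z), 1) :: column n rest m).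
Proof.
case: rest => [//|r rest] _ rest_range.
apply: dominated_cons.
  by apply: column_dominated; apply/allP => x /(allP rest_range); lia.
move: rest_range => /= /andP[r_range _].
rewrite column_cons has_cat Xvar_sl; last by lia.
have -> : m + (size rest).+1%:Z = m + (size rest)%:Z + 1 by lia.
by rewrite /= neg_factor_ypos ?ypos_lt_mono //; lia.
Qed.

Lemma column_normal_form n m rs r :
  sorted ltn (rcons rs r) -> all (fun r => 1 <= r <= 2 * n)%N (rcons rs r) ->
  r = (size rs).+1 /\ tail_equiv n (column n (rcons rs r) m) [:: (ypos n r m, 1)]
  \/ exists2 A, tail_equiv n (column n (rcons rs r) m) A
       & dominated n A /\ (ypos n r.-1 (m + 1), -1) \in A.
Proof.
move=> srt range.
have [a [rest [split_rs rest_ge]]] : exists a rest,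
    rcons rs r = iota 1 a ++ rest /\ all (leq (1 + a).+1) rest.
  by apply: split_initial_run srt _; apply: sub_all range => x /andP[].
have rest_range : all (fun r => a.+2 <= r <= 2 * n)%N rest.
  apply/allP => x x_rest; rewrite -add1n (allP rest_ge) //=.
  by move: range; rewrite split_rs all_cat => /andP[_ /allP/(_ x x_rest)/andP[]].
case: (lastP rest) split_rs rest_range => [|rest' r'] split_rs rest_range.
  left; rewrite cats0 in split_rs.
  have a_eq : a = (size rs).+1 by rewrite -(size_iota 1 a) -split_rs size_rcons.
  have r_eq : r = a.
    move: split_rs; rewrite a_eq -(addn1 (size rs)) iotaD cats1.
    by move=> /rcons_inj[_ ->]; rewrite addnC.
  split; first by rewrite r_eq.
  rewrite split_rs r_eq.
  by apply: column_iota1; move: range; rewrite -r_eq all_rcons => /andP[/andP[]].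
have r'_eq : r' = r by move: split_rs; rewrite -rcons_cat => /rcons_inj[].
subst r'; right.
exists ((ypos n a (m + (size (rcons rest' r))%:Z), 1) :: column n (rcons rest' r) m).
  rewrite split_rs column_cat -cat1s; apply: tail_equiv_cat => //.
  by apply: column_iota1; move: rest_range; rewrite all_rcons; lia.
split; first by apply: run_column_dominated => //; rewrite -size_eq0 size_rcons.
rewrite in_cons column_rcons mem_cat Xvar_sl ?mem_seq2 ?eqxx ?orbT //.
by move: rest_range; rewrite all_rcons; lia.
Qed.

Lemma sl_lrank n a : letter_valid n a -> sl n (lrank n a) = a.
Proof.
case: a => i /= i_range; rewrite /sl; case: ifP => i_le //; try lia.
by congr Bar; lia.
Qed.

Lemma inMk_as_column n q M : inMk n q 1 M ->
  exists rs, [/\ sorted ltn rs, all (fun r => 1 <= r <= 2 * n)%N rs, size rs = q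
               & M = column n rs 1].
Proof.
case=> ls [size_ls valid sorted_ls ->]; exists (map (lrank n) ls); split.
- by rewrite sorted_map.
- by rewrite all_map; apply: sub_all valid => -[] i /=; lia.
- by rewrite size_map.
- rewrite /column; congr Xprod; symmetry.
  by elim: ls {size_ls sorted_ls} valid => //= a ls IH /andP[/sl_lrank -> /IH ->].
Qed.

Lemma rcons_iota_ranks n b c r : (1 <= b)%N -> (b + c <= r <= 2 * n)%N ->
  sorted ltn (rcons (iota b c) r) && all (fun x => 1 <= x <= 2 * n)%N (rcons (iota b c) r).
Proof.
move=> b_ge1 r_range.
rewrite (sorted_pairwise ltn_trans) pairwise_rcons -(sorted_pairwise ltn_trans).
rewrite iota_ltn_sorted all_rcons andbT; apply/and3P; split; try lia;
  by apply/allP => x; rewrite mem_iota; lia.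
Qed.

Lemma M1_as_column n p ls1 : (1 <= p <= 2 * n - 1)%N ->
  ls1 = rcons [seq sl n j | j <- iota 2 (p - 1)] (sl n (2 * n))
  \/ ls1 = [seq sl n j | j <- iota 2 p]
  \/ ls1 = rcons [seq sl n j | j <- iota 1 (p - 1)] (sl n (2 * n)) ->
  exists rs r, [/\ ls1 = map (sl n) (rcons rs r), sorted ltn (rcons rs r),
    all (fun r => 1 <= r <= 2 * n)%N (rcons rs r), (size rs).+1 = p & (p < r <= 2 * n)%N].
Proof.
move=> p_range [|[|]] ->.
- exists (iota 2 (p - 1)), (2 * n); rewrite map_rcons size_iota.
  have /andP[] := @rcons_iota_ranks n 2 (p - 1) (2 * n) isT ltac:(lia).
  by split => //; lia.
- exists (iota 2 (p - 1)), p.+1; rewrite size_iota.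
  have -> : iota 2 p = rcons (iota 2 (p - 1)) p.+1.
    have {1}-> : p = (p - 1 + 1)%N by lia.
    by rewrite iotaD /= cats1; congr rcons; lia.
  have /andP[] := @rcons_iota_ranks n 2 (p - 1) p.+1 isT ltac:(lia).
  by split => //; lia.
- exists (iota 1 (p - 1)), (2 * n); rewrite map_rcons size_iota.
  have /andP[] := @rcons_iota_ranks n 1 (p - 1) (2 * n) isT ltac:(lia).
  by split => //; lia.
Qed.

Theorem lemma5p8 (n : nat) (m : int) (p q : nat) :
  (2 <= n)%N -> 1 <= m ->
  (1 <= p <= 2 * n - 1)%N -> (1 <= q <= 2 * n - 1)%N ->
  1 + (q - n)%N%:Z <= m + (p - n)%N%:Z ->
  forall ls1 : seq letter,
    ls1 = rcons [seq sl n j | j <- iota 2 (p - 1)] (sl n (2 * n))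
    \/ ls1 = [seq sl n j | j <- iota 2 p]
    \/ ls1 = rcons [seq sl n j | j <- iota 1 (p - 1)] (sl n (2 * n)) ->
  forall M2 : monomial, inMk n q 1 M2 ->
    ~ highest_weight n (Xprod n ls1 m ++ M2).
Proof.
move=> _ _ p_range q_range mpq ls1 ls1_def M2 /inMk_as_column[rs2 [sorted2 range2 size2 ->]].
have [rs1 [r [-> sorted1 range1 size1 /andP[p_lt_r r_le]]]] := M1_as_column p_range ls1_def.
have [[r_eq _] | [A1 equiv1 [dom1 negA1]]] := column_normal_form m sorted1 range1.
  by move: p_lt_r; rewrite r_eq size1 ltnn.
have r_neg : neg_factor n (ypos n r.-1 (m + 1), -1) by apply: neg_factor_ypos; lia.
have has_neg : has (neg_factor n) A1 by apply/hasP; exists (ypos n r.-1 (m + 1), -1).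
case: (lastP rs2) sorted2 range2 size2 => [|rs2' r2] sorted2 range2 size2 hw.
  by move: q_range; rewrite -size2.
have [[r2_eq equiv2] | [A2 equiv2 [dom2 _]]] := column_normal_form 1 sorted2 range2.
  apply: (@not_highest_weight_dominated n ((ypos n r2 1, 1) :: A1)).
  - apply: dominated_cons dom1 _; apply/hasP; exists (ypos n r.-1 (m + 1), -1) => //.
    have r2_q : r2 = q by rewrite r2_eq -size2 size_rcons.
    by rewrite r_neg /pos_lt /ypos /= r2_q; case: ifP; case: ifP; lia.
  - by rewrite /= has_neg orbT.
  - apply: (highest_weight_equiv (tail_equiv_cat equiv2 equiv1)).
    exact: highest_weight_equiv (tail_equiv_catC _ _) hw.
apply: (not_highest_weight_dominated (dominated_cat dom1 dom2)); first by rewrite has_cat has_neg.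
exact: highest_weight_equiv (tail_equiv_cat equiv1 equiv2) hw.
Qed.
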